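(* There exists a set $A\subset\mathbb{N}$ with $d^*(A)>0$ such that there do not exist $B\subset\mathbb{N}$ with $d^*(B)>0$ and an infinite set $C\subset\mathbb{N}$ with $B+C\subset A$.
   Context: Convention: $\mathbb{N}=\{0,1,2,\dots\}$. For $A\subset\mathbb{N}$, $d^*(A)=\lim_{N\to\infty}\sup_{M\in\mathbb{N}}\frac{|A\cap[M,M+N)|}{N}$ (upper Banach density). $B+C=\{b+c\colon b\in B,\ c\in C\}$. *)

From Stdlib Require Import Reals.
Open Scope R_scope.

(* Subsets of N are represented by boolean predicates nat -> bool
   (classically equivalent to arbitrary subsets). *)

Fixpoint cnt (A : nat -> bool) (M N : nat) : nat :=
  match N with
  | O => O
  | S N' => (if A M then 1 else 0) + cnt A (S M) N'
  end%nat.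

Definition window_density (A : nat -> bool) (N M : nat) : R :=
  INR (cnt A M N) / INR N.

Definition upper_banach_density_is (A : nat -> bool) (d : R) : Prop :=
  exists s : nat -> R,
    (forall N : nat, is_lub (fun x => exists M : nat, x = window_density A N M) (s N))
    /\ Un_cv s d.

Definition pos_ubd (A : nat -> bool) : Prop :=
  exists d : R, upper_banach_density_is A d /\ 0 < d.

Definition infinite_set (C : nat -> bool) : Prop :=
  forall n : nat, exists m : nat, (n <= m)%nat /\ C m = true.

Definition sumset_sub (B C A : nat -> bool) : Prop :=
  forall b c : nat, B b = true -> C c = true -> A (b + c)%nat = true.

(* We take A = {n | tm n = 0}, the zeros of the Thue–Morse sequence tm (the
   parity of the binary digit sum).  Exactly one of 2m, 2m+1 lies in A, so
   every window [M, M+N) holds N/2 ± 1 elements of A and d*(A) = 1/2.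

   Suppose B + C ⊆ A with C infinite, so tm (b + c) = 0 for b ∈ B, c ∈ C.
   We show that for every J, B lies in a 2^T-periodic set of density at most
   (31/32)^J; since a subset of a periodic set has upper Banach density at
   most the density of that set, d*(B) = 0.  One thinning stage: pigeonhole
   gives c < c' = c + 2^T w in C; the digit-splitting identity
   tm (2^K q + r) = tm q ⊕ tm r turns tm (b+c) = tm (b+c') into
   tm q = tm (q + w) for the block index q = ⌊(b+c)/2^T⌋, and the
   autocorrelation bound (at most 7/8 of s < 2^a satisfy tm s = tm (s+w)
   when 8w <= 2^a) shows this condition cuts the density by 31/32. *)

From Stdlib Require Import Reals Lra Arith Lia Bool List.
Import ListNotations.
Open Scope nat_scope.

Fixpoint nsum (f : nat -> nat) (n : nat) : nat :=
  match n with 0 => 0 | S n => nsum f n + f n end.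

Lemma nsum_ext f g n : (forall i, i < n -> f i = g i) -> nsum f n = nsum g n.
Proof.
  induction n as [|n IH]; intros H; simpl; auto.
  rewrite IH, H; auto.
Qed.

Lemma nsum_le f g n : (forall i, i < n -> f i <= g i) -> nsum f n <= nsum g n.
Proof.
  induction n as [|n IH]; intros H; simpl; auto.
  assert (f n <= g n) by (apply H; lia).
  assert (nsum f n <= nsum g n) by (apply IH; intros; apply H; lia).
  lia.
Qed.

Lemma nsum_const k n : nsum (fun _ => k) n = n * k.
Proof. induction n; simpl; lia. Qed.

Lemma nsum_add f g n : nsum (fun i => f i + g i) n = nsum f n + nsum g n.
Proof. induction n; simpl; lia. Qed.

Lemma nsum_exchange (f : nat -> nat -> nat) n m :
  nsum (fun y => nsum (fun z => f y z) m) n = nsum (fun z => nsum (fun y => f y z) n) m.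
Proof.
  revert m; induction n as [|n IH]; intros m; simpl.
  - induction m; simpl; lia.
  - rewrite IH, <- nsum_add. reflexivity.
Qed.

Lemma cnt_add P N1 N2 M : cnt P M (N1 + N2) = cnt P M N1 + cnt P (M + N1) N2.
Proof.
  revert M; induction N1 as [|N1 IH]; intros M; simpl.
  - now rewrite Nat.add_0_r.
  - rewrite IH. replace (S M + N1) with (M + S N1) by lia. lia.
Qed.

Lemma cnt_le P N M : cnt P M N <= N.
Proof.
  revert M; induction N as [|N IH]; intros M; simpl; auto.
  specialize (IH (S M)). destruct (P M); lia.
Qed.

Lemma cnt_mono P Q N M :
  (forall i, P i = true -> Q i = true) -> cnt P M N <= cnt Q M N.
Proof.
  intros H; revert M; induction N as [|N IH]; intros M; simpl; auto.
  specialize (IH (S M)).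
  destruct (P M) eqn:E; [rewrite (H _ E) | destruct (Q M)]; lia.
Qed.

Lemma cnt_ext P Q N M :
  (forall i, M <= i < M + N -> P i = Q i) -> cnt P M N = cnt Q M N.
Proof.
  revert M; induction N as [|N IH]; intros M H; simpl; auto.
  rewrite (H M) by lia. rewrite IH; auto. intros i Hi; apply H; lia.
Qed.

Lemma cnt_translate P N M : cnt P M N = cnt (fun i => P (i + M)) 0 N.
Proof.
  assert (G : forall k, cnt P (k + M) N = cnt (fun i => P (i + M)) k N).
  { induction N as [|N IH]; intros k; simpl; auto. now rewrite <- IH. }
  exact (G 0).
Qed.

Lemma cnt_sub P M N M' N' :
  M' <= M -> M + N <= M' + N' -> cnt P M N <= cnt P M' N'.
Proof.
  intros H1 H2.
  replace N' with ((M - M') + (N + (M' + N' - M - N))) by lia.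
  rewrite !cnt_add. replace (M' + (M - M')) with M by lia. lia.
Qed.

Lemma cnt_compl P N M : cnt P M N + cnt (fun i => negb (P i)) M N = N.
Proof.
  revert M; induction N as [|N IH]; intros M; simpl; auto.
  specialize (IH (S M)). destruct (P M); simpl; lia.
Qed.

Lemma cnt_or P Q N M : cnt (fun i => P i || Q i) M N <= cnt P M N + cnt Q M N.
Proof.
  revert M; induction N as [|N IH]; intros M; simpl; auto.
  specialize (IH (S M)). destruct (P M), (Q M); simpl; lia.
Qed.

Lemma cnt_false N M : cnt (fun _ => false) M N = 0.
Proof. revert M; induction N; simpl; auto. Qed.

Lemma cnt_nsum P N M : cnt P M N = nsum (fun i => if P (M + i) then 1 else 0) N.
Proof.
  rewrite cnt_translate.
  rewrite (nsum_ext _ (fun i => if P (i + M) then 1 else 0))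
    by (intros i _; now rewrite Nat.add_comm).
  induction N as [|N IH]; [reflexivity|].
  replace (S N) with (N + 1) by lia. rewrite cnt_add.
  replace (N + 1) with (S N) by lia. simpl nsum. rewrite IH.
  simpl. destruct (P (N + M)); simpl; lia.
Qed.

Lemma cnt_blocks P U V M : cnt P M (U * V) = nsum (fun u => cnt P (M + u * V) V) U.
Proof.
  revert M; induction U as [|U IH]; intros M; simpl; auto.
  replace (V + U * V) with (U * V + V) by lia.
  rewrite cnt_add, IH. reflexivity.
Qed.

Lemma cnt_rotate P n Z : 0 < n -> cnt (fun y => P ((y + Z) mod n)) 0 n = cnt P 0 n.
Proof.
  intros Hn.
  rewrite (cnt_ext _ (fun y => P ((y + Z mod n) mod n))).
  2:{ intros i _. now rewrite Nat.Div0.add_mod_idemp_r. }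
  assert (Hz : Z mod n < n) by (apply Nat.mod_upper_bound; lia).
  set (z := Z mod n) in *. clearbody z.
  assert (Hsplit : forall Q, cnt Q 0 n = cnt Q 0 (n - z) + cnt Q (n - z) z /\
                            cnt Q 0 n = cnt Q 0 z + cnt Q z (n - z)).
  { intros Q. rewrite <- !cnt_add. split; f_equal; lia. }
  rewrite (proj1 (Hsplit _)), (proj2 (Hsplit P)).
  assert (Hhead : cnt (fun y => P ((y + z) mod n)) 0 (n - z) = cnt P z (n - z)).
  { rewrite (cnt_translate P). apply cnt_ext. intros i Hi.
    now rewrite Nat.mod_small by lia. }
  assert (Htail : cnt (fun y => P ((y + z) mod n)) (n - z) z = cnt P 0 z).
  { rewrite cnt_translate, (cnt_translate P z 0). apply cnt_ext. intros i Hi.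
    f_equal. replace (i + (n - z) + z) with (i + 1 * n) by lia.
    rewrite Nat.Div0.mod_add, Nat.mod_small; lia. }
  lia.
Qed.

Definition periodic (L : nat) (P : nat -> bool) : Prop := forall x, P x = P (x mod L).

Section Periodic.
Variables (L : nat) (P : nat -> bool).
Hypotheses (HL : L <> 0) (HP : periodic L P).

Lemma periodic_block k : cnt P (k * L) L = cnt P 0 L.
Proof.
  rewrite cnt_translate. apply cnt_ext. intros i Hi.
  rewrite HP, Nat.Div0.mod_add, Nat.mod_small by lia. reflexivity.
Qed.

(* Any window of length q*L meets at most q+1 full periods. *)
Lemma periodic_window_bound M q : cnt P M (q * L) <= (q + 1) * cnt P 0 L.
Proof.
  pose proof (Nat.div_mod_eq M L). pose proof (Nat.mod_upper_bound M L HL).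
  transitivity (cnt P (M / L * L) ((q + 1) * L)); [apply cnt_sub; nia|].
  rewrite cnt_blocks, (nsum_ext _ (fun _ => cnt P 0 L)), nsum_const; [lia|].
  intros u _. replace (M / L * L + u * L) with ((M / L + u) * L) by lia.
  apply periodic_block.
Qed.

End Periodic.

Lemma div_mod_mul_decomp x L K : x = x mod (L * K) + (x / (L * K) * K) * L.
Proof. pose proof (Nat.div_mod_eq x (L * K)). lia. Qed.

Definition refine (Phi Q : nat -> bool) (L K c : nat) (x : nat) : bool :=
  Phi x && Q (((x + c) / L) mod K).

Lemma refine_periodic Phi Q L K c :
  L <> 0 -> periodic L Phi -> periodic (L * K) (refine Phi Q L K c).
Proof.
  intros HL HPhi x. unfold refine.
  rewrite (div_mod_mul_decomp x L K) at 1 2.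
  set (x' := x mod (L * K)). set (h := x / (L * K) * K).
  rewrite HPhi, Nat.Div0.mod_add, <- HPhi. f_equal.
  replace (x' + h * L + c) with ((x' + c) + h * L) by lia.
  rewrite Nat.div_add by exact HL. unfold h.
  now rewrite Nat.Div0.mod_add.
Qed.

Lemma refine_count Phi Q L K c :
  L <> 0 -> K <> 0 -> periodic L Phi ->
  cnt (refine Phi Q L K c) 0 (K * L) = cnt Q 0 K * cnt Phi 0 L.
Proof.
  intros HL HK HPhi. unfold refine. rewrite cnt_blocks.
  rewrite (nsum_ext _ (fun y => nsum (fun z =>
    if Phi z then (if Q ((y + (z + c) / L) mod K) then 1 else 0) else 0) L)).
  2:{ intros y _. rewrite cnt_nsum. apply nsum_ext. intros z Hz.
      replace (0 + y * L + z) with (z + y * L) by lia.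
      rewrite HPhi, Nat.Div0.mod_add, (Nat.mod_small z) by exact Hz.
      replace (z + y * L + c) with ((z + c) + y * L) by lia.
      rewrite Nat.div_add, (Nat.add_comm y) by exact HL.
      now destruct (Phi z). }
  rewrite nsum_exchange.
  rewrite (nsum_ext _ (fun z => if Phi z then cnt Q 0 K else 0)).
  2:{ intros z _. destruct (Phi z).
      - rewrite <- (cnt_rotate Q K ((z + c) / L)) by lia.
        rewrite cnt_nsum. apply nsum_ext. intros y _.
        reflexivity.
      - rewrite nsum_const. lia. }
  rewrite (cnt_nsum Phi). simpl (0 + _).
  clear. induction L as [|L IH]; simpl; [lia|].
  rewrite IH. destruct (Phi L); lia.
Qed.

(* The Thue–Morse sequence: [tm n] is the parity of the binary digit sum of
   n.  It is computed by repeated halving, with a fuel argument f >= n. *)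
Fixpoint tm_fuel (f n : nat) : bool :=
  match f with
  | 0 => false
  | S f => xorb (Nat.odd n) (tm_fuel f (Nat.div2 n))
  end.

Definition tm (n : nat) : bool := tm_fuel n n.

Lemma tm_fuel_zero f : tm_fuel f 0 = false.
Proof. induction f; simpl; auto. Qed.

Lemma tm_fuel_enough f1 f2 n : n <= f1 -> n <= f2 -> tm_fuel f1 n = tm_fuel f2 n.
Proof.
  revert f2 n; induction f1 as [|f1 IH]; intros f2 n H1 H2.
  - replace n with 0 by lia. now rewrite !tm_fuel_zero.
  - destruct f2 as [|f2]; [replace n with 0 by lia; simpl; now rewrite tm_fuel_zero|].
    simpl. f_equal. destruct n as [|n]; [simpl; now rewrite !tm_fuel_zero|].
    pose proof (Nat.lt_div2 (S n)). apply IH; lia.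
Qed.

Lemma tm_fuel_S f n : tm_fuel (S f) n = xorb (Nat.odd n) (tm_fuel f (Nat.div2 n)).
Proof. reflexivity. Qed.

Lemma tm_double n : tm (2 * n) = tm n.
Proof.
  unfold tm. destruct n as [|n]; [reflexivity|].
  replace (2 * S n) with (S (2 * n + 1)) at 1 by lia.
  rewrite tm_fuel_S, Nat.div2_double.
  replace (Nat.odd (2 * S n)) with false by (now rewrite Nat.odd_mul).
  rewrite Bool.xorb_false_l. apply tm_fuel_enough; lia.
Qed.

Lemma tm_double_succ n : tm (2 * n + 1) = negb (tm n).
Proof.
  unfold tm. replace (2 * n + 1) with (S (2 * n)) at 1 by lia. rewrite tm_fuel_S.
  replace (Nat.div2 (2 * n + 1)) with n
    by (replace (2 * n + 1) with (S (2 * n)) by lia; now rewrite Nat.div2_succ_double).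
  replace (Nat.odd (2 * n + 1)) with true
    by (now rewrite Nat.add_comm, Nat.odd_add_mul_2).
  rewrite Bool.xorb_true_l. now rewrite (tm_fuel_enough (2 * n) n n) by lia.
Qed.

(* Splitting off the K lowest binary digits: digit sums add. *)
Lemma tm_split K q r : r < 2 ^ K -> tm (2 ^ K * q + r) = xorb (tm q) (tm r).
Proof.
  revert q r; induction K as [|K IH]; intros q r Hr.
  - simpl in Hr. replace r with 0 by lia. simpl.
    rewrite Nat.add_0_r, Nat.add_0_r. unfold tm at 3. simpl. now destruct (tm q).
  - rewrite Nat.pow_succ_r' in *.
    destruct (Nat.Even_or_Odd r) as [[r' ->] | [r' ->]].
    + replace (2 * 2 ^ K * q + 2 * r') with (2 * (2 ^ K * q + r')) by lia.
      rewrite !tm_double. apply IH. lia.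
    + replace (2 * 2 ^ K * q + (2 * r' + 1)) with (2 * (2 ^ K * q + r') + 1) by lia.
      rewrite !tm_double_succ, IH by lia. now destruct (tm q), (tm r').
Qed.

Definition tm_jump (u : nat) : bool := xorb (tm u) (tm (u + 1)).

Lemma tm_jump_even u : tm_jump (2 * u) = true.
Proof. unfold tm_jump. rewrite tm_double_succ, tm_double. now destruct (tm u). Qed.

Lemma tm_jump_4i1 i : tm_jump (4 * i + 1) = false.
Proof.
  unfold tm_jump.
  replace (4 * i + 1) with (2 * (2 * i) + 1) by lia.
  replace (2 * (2 * i) + 1 + 1) with (2 * (2 * i + 1)) by lia.
  rewrite tm_double_succ, (tm_double (2 * i + 1)), tm_double_succ, tm_double.
  now destruct (tm i).
Qed.

(* Jumps and non-jumps each occupy at most 3/4 of any run of 4m positions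
   starting at 0, because the pattern of u = 4i, 4i+1, 4i+2 is 1, 0, 1. *)
Lemma tm_jump_balanced m :
  cnt tm_jump 0 (m * 4) <= 3 * m /\ cnt (fun u => negb (tm_jump u)) 0 (m * 4) <= 3 * m.
Proof.
  rewrite !cnt_blocks.
  assert (F : forall i, tm_jump (i * 4) = true /\ tm_jump (S (i * 4)) = false /\
                        tm_jump (S (S (i * 4))) = true).
  { intros i. split; [|split].
    - replace (i * 4) with (2 * (2 * i)) by lia. apply tm_jump_even.
    - replace (S (i * 4)) with (4 * i + 1) by lia. apply tm_jump_4i1.
    - replace (S (S (i * 4))) with (2 * (2 * i + 1)) by lia. apply tm_jump_even. }
  replace (3 * m) with (nsum (fun _ => 3) m) by (rewrite nsum_const; lia).
  split; apply nsum_le; intros i _; destruct (F i) as [F1 [F2 F3]];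
    simpl (0 + _); cbn [cnt]; rewrite F1, F2, F3;
    destruct (tm_jump (S (S (S (i * 4))))); simpl; lia.
Qed.

Lemma nsum_if (Y : nat -> bool) a b U :
  nsum (fun u => if Y u then a else b) U = a * cnt Y 0 U + b * cnt (fun u => negb (Y u)) 0 U.
Proof.
  rewrite !cnt_nsum. simpl (0 + _).
  induction U as [|U IH]; simpl; [lia|].
  rewrite IH. destruct (Y U); simpl; lia.
Qed.

Definition agree (w s : nat) : bool := Bool.eqb (tm s) (tm (s + w)).

(* For v in the last w positions of a block of length V = 2^k, the shift by
   w lands in the next block, at v + w - V. *)
Definition carry_pattern (V w v : nat) : bool := xorb (tm v) (tm (v + w - V)).

(* Inside the block [uV, (u+1)V), agreement at the last w positions is
   governed by whether tm jumps at u; the first V - w positions are bounded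
   trivially. *)
Lemma agree_block k w u : w <= 2 ^ k ->
  cnt (agree w) (u * 2 ^ k) (2 ^ k) <=
  (2 ^ k - w) + (if tm_jump u then cnt (carry_pattern (2 ^ k) w) (2 ^ k - w) w
                 else cnt (fun v => negb (carry_pattern (2 ^ k) w v)) (2 ^ k - w) w).
Proof.
  intros Hw. set (V := 2 ^ k) in *.
  replace V with ((V - w) + w) at 2 by lia. rewrite cnt_add.
  pose proof (cnt_le (agree w) (V - w) (u * V)).
  enough (cnt (agree w) (u * V + (V - w)) w =
          cnt (fun v => Bool.eqb (tm_jump u) (carry_pattern V w v)) (V - w) w) as ->.
  { apply Nat.add_le_mono; [assumption|].
    destruct (tm_jump u); apply Nat.eq_le_incl, cnt_ext; intros i _;
      now destruct (carry_pattern V w i). }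
  rewrite cnt_translate, (cnt_translate _ w (V - w)). apply cnt_ext. intros i Hi.
  unfold agree, carry_pattern, tm_jump.
  replace (i + (u * V + (V - w))) with (2 ^ k * u + (i + (V - w))) by (unfold V; lia).
  replace (2 ^ k * u + (i + (V - w)) + w) with (2 ^ k * (u + 1) + (i + (V - w) + w - V))
    by (unfold V; lia).
  rewrite !tm_split by (unfold V in *; lia).
  now destruct (tm u), (tm (u + 1)), (tm (i + (V - w))), (tm (i + (V - w) + w - V)).
Qed.

(* With 2^p <= w < 2^(p+1) = V, cut
   [0, 2^a) into 4m blocks of length V; the last w positions of block u
   agree according to a fixed pattern XOR tm_jump u, and jumps and
   non-jumps each fill at most 3/4 of the blocks. *)
Lemma tm_autocorrelation w a : 1 <= w -> 8 * w <= 2 ^ a ->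
  8 * cnt (agree w) 0 (2 ^ a) <= 7 * 2 ^ a.
Proof.
  intros Hw Ha.
  destruct (Nat.log2_spec w) as [Hp1 Hp2]; [lia|].
  set (p := Nat.log2 w) in *. clearbody p.
  assert (HV : 2 ^ S p = 2 * 2 ^ p) by apply Nat.pow_succ_r'.
  assert (Hap : p + 3 <= a).
  { apply (Nat.pow_le_mono_r_iff 2); [lia|]. rewrite Nat.pow_add_r. simpl (2 ^ 3). lia. }
  set (m := 2 ^ (a - p - 3)).
  assert (H2a : 2 ^ a = (m * 4) * 2 ^ S p).
  { unfold m. replace 4 with (2 ^ 2) by reflexivity.
    rewrite <- !Nat.pow_add_r. f_equal. lia. }
  set (n1 := cnt (carry_pattern (2 ^ S p) w) (2 ^ S p - w) w).
  set (n0 := cnt (fun v => negb (carry_pattern (2 ^ S p) w v)) (2 ^ S p - w) w).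
  assert (Hn : n1 + n0 = w) by apply cnt_compl.
  rewrite H2a, cnt_blocks.
  assert (Hblocks : nsum (fun u => cnt (agree w) (0 + u * 2 ^ S p) (2 ^ S p)) (m * 4)
                    <= nsum (fun u => (2 ^ S p - w) + if tm_jump u then n1 else n0) (m * 4))
    by (apply nsum_le; intros u _; apply agree_block; lia).
  rewrite nsum_add, nsum_if, nsum_const in Hblocks.
  destruct (tm_jump_balanced m) as [HX1 HX2].
  assert (n1 * cnt tm_jump 0 (m * 4) <= n1 * (3 * m)) by (apply Nat.mul_le_mono_l; auto).
  assert (n0 * cnt (fun u => negb (tm_jump u)) 0 (m * 4) <= n0 * (3 * m))
    by (apply Nat.mul_le_mono_l; auto).
  assert (m * 2 ^ p <= m * w) by (apply Nat.mul_le_mono_l; auto).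
  nia.
Qed.

Definition agree_in_block (a w s : nat) : bool := (2 ^ a <=? s + w) || agree w s.

Lemma agree_in_block_sparse a w : 1 <= w -> 32 * w <= 2 ^ a ->
  32 * cnt (agree_in_block a w) 0 (2 ^ a) <= 31 * 2 ^ a.
Proof.
  intros H1 H2. pose proof (tm_autocorrelation w a H1 ltac:(lia)) as Hc.
  pose proof (cnt_or (fun s => 2 ^ a <=? s + w) (agree w) (2 ^ a) 0) as Ho.
  assert (Hover : cnt (fun s => 2 ^ a <=? s + w) 0 (2 ^ a) <= w).
  { replace (cnt _ 0 (2 ^ a)) with (cnt (fun s => 2 ^ a <=? s + w) 0 ((2 ^ a - w) + w))
      by (f_equal; lia).
    rewrite cnt_add.
    rewrite (cnt_ext _ (fun _ => false) (2 ^ a - w)), cnt_false.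
    - pose proof (cnt_le (fun s => 2 ^ a <=? s + w) w (0 + (2 ^ a - w))). lia.
    - intros i Hi. apply Nat.leb_gt. lia. }
  unfold agree_in_block. lia.
Qed.

Lemma tm_block_agree T w n : tm n = tm (n + 2 ^ T * w) -> tm (n / 2 ^ T) = tm (n / 2 ^ T + w).
Proof.
  assert (HT : 2 ^ T <> 0) by (apply Nat.pow_nonzero; lia).
  pose proof (Nat.div_mod_eq n (2 ^ T)) as Hn.
  pose proof (Nat.mod_upper_bound n (2 ^ T) HT).
  replace (n + 2 ^ T * w) with (2 ^ T * (n / 2 ^ T + w) + n mod 2 ^ T) by lia.
  rewrite Hn at 1. rewrite !tm_split by assumption.
  now destruct (tm (n / 2 ^ T)), (tm (n / 2 ^ T + w)), (tm (n mod 2 ^ T)).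
Qed.

Lemma agree_in_block_mod a w q : tm q = tm (q + w) -> agree_in_block a w (q mod 2 ^ a) = true.
Proof.
  intros Hq. assert (Ha : 2 ^ a <> 0) by (apply Nat.pow_nonzero; lia).
  unfold agree_in_block. apply Bool.orb_true_iff.
  destruct (Nat.le_gt_cases (2 ^ a) (q mod 2 ^ a + w)) as [Hle | Hgt].
  - left. now apply Nat.leb_le.
  - right. unfold agree. apply Bool.eqb_true_iff.
    pose proof (Nat.div_mod_eq q (2 ^ a)) as Hd.
    rewrite Hd, tm_split in Hq by (now apply Nat.mod_upper_bound).
    replace (2 ^ a * (q / 2 ^ a) + q mod 2 ^ a + w)
      with (2 ^ a * (q / 2 ^ a) + (q mod 2 ^ a + w)) in Hq by lia.
    rewrite tm_split in Hq by assumption.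
    now destruct (tm (q / 2 ^ a)), (tm (q mod 2 ^ a)), (tm (q mod 2 ^ a + w)).
Qed.

Lemma nodup_map_collision (f : nat -> nat) l : NoDup l -> ~ NoDup (map f l) ->
  exists x y, In x l /\ In y l /\ x <> y /\ f x = f y.
Proof.
  induction l as [|a l IH]; intros Hl Hm.
  - exfalso. apply Hm. constructor.
  - inversion Hl as [|? ? Ha Hl']; subst. simpl in Hm.
    destruct (in_dec Nat.eq_dec (f a) (map f l)) as [Hin | Hin].
    + apply in_map_iff in Hin. destruct Hin as [y [Hy1 Hy2]].
      exists a, y. repeat split; simpl; auto. intros ->; contradiction.
    + destruct IH as [x [y [? [? [? ?]]]]]; auto.
      * intros HN. apply Hm. now constructor.
      * exists x, y. simpl. auto.
Qed.

Lemma infinite_set_lists C : infinite_set C ->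
  forall k, exists l, length l = k /\ NoDup l /\ (forall x, In x l -> C x = true).
Proof.
  intros HC k. induction k as [|k IH].
  - exists []. repeat split; [constructor | intros x []].
  - destruct IH as [l [H1 [H2 H3]]]. destruct (HC (S (list_max l))) as [m [Hm1 Hm2]].
    exists (m :: l). repeat split.
    + simpl. lia.
    + constructor; auto. intros Hin.
      assert (Hmax : Forall (fun x => x <= list_max l) l) by (apply list_max_le; lia).
      rewrite Forall_forall in Hmax. specialize (Hmax m Hin). lia.
    + intros x [<- | Hx]; auto.
Qed.

Lemma infinite_set_congruent C K : infinite_set C -> K <> 0 ->
  exists c c', c < c' /\ C c = true /\ C c' = true /\ c mod K = c' mod K.
Proof.
  intros HC HK.
  destruct (infinite_set_lists C HC (S K)) as [l [H1 [H2 H3]]].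
  assert (HN : ~ NoDup (map (fun x => x mod K) l)).
  { intros HN. apply NoDup_incl_length with (l' := seq 0 K) in HN.
    - rewrite length_map, length_seq in HN. lia.
    - intros y Hy. apply in_map_iff in Hy. destruct Hy as [x [<- _]]. apply in_seq.
      pose proof (Nat.mod_upper_bound x K HK). lia. }
  destruct (nodup_map_collision _ l H2 HN) as [x [y [Hx [Hy [Hxy Hf]]]]].
  destruct (Nat.lt_total x y) as [Hlt | [Heq | Hgt]].
  - exists x, y. auto.
  - contradiction.
  - exists y, x. auto.
Qed.

Definition shifts_into_zeros (C : nat -> bool) (b : nat) : Prop :=
  forall c, C c = true -> tm (b + c) = false.

(* One thinning stage: a 2^T-periodic set containing all b with b + C ⊆ A
   can be refined to a 2^(T+a)-periodic one, still containing them, whose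
   density is smaller by the factor 31/32.  Take c < c' = c + 2^T w in C;
   then b + c and b + c' both lie in A, which constrains the block index of
   b + c through [tm_block_agree] and [agree_in_block_mod]. *)
Lemma thinning_stage C T Phi : infinite_set C -> periodic (2 ^ T) Phi ->
  (forall b, shifts_into_zeros C b -> Phi b = true) ->
  exists a Phi', periodic (2 ^ (T + a)) Phi' /\
    (forall b, shifts_into_zeros C b -> Phi' b = true) /\
    32 * cnt Phi' 0 (2 ^ (T + a)) <= 31 * 2 ^ a * cnt Phi 0 (2 ^ T).
Proof.
  intros HC HPhi Hcover.
  assert (HT : 2 ^ T <> 0) by (apply Nat.pow_nonzero; lia).
  destruct (infinite_set_congruent C (2 ^ T) HC HT) as [c [c' [Hcc [HC1 [HC2 Hmod]]]]].
  set (w := c' / 2 ^ T - c / 2 ^ T).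
  assert (Hc' : c' = c + 2 ^ T * w).
  { pose proof (Nat.div_mod_eq c (2 ^ T)). pose proof (Nat.div_mod_eq c' (2 ^ T)).
    assert (c / 2 ^ T <= c' / 2 ^ T) by (apply Nat.Div0.div_le_mono; lia).
    unfold w. rewrite Nat.mul_sub_distr_l. lia. }
  assert (Hw : 1 <= w) by (destruct w; [rewrite Nat.mul_0_r in Hc'; lia | lia]).
  set (a := w + 5).
  assert (Ha : 32 * w <= 2 ^ a).
  { unfold a. rewrite Nat.pow_add_r. pose proof (Nat.pow_gt_lin_r 2 w). simpl (2 ^ 5). lia. }
  assert (Ha0 : 2 ^ a <> 0) by (apply Nat.pow_nonzero; lia).
  exists a, (refine Phi (agree_in_block a w) (2 ^ T) (2 ^ a) c).
  rewrite Nat.pow_add_r. split; [|split].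
  - now apply refine_periodic.
  - intros b Hb. unfold refine. rewrite Hcover by exact Hb. simpl.
    apply agree_in_block_mod, tm_block_agree.
    rewrite <- Nat.add_assoc, <- Hc', (Hb c), (Hb c'); auto.
  - rewrite (Nat.mul_comm (2 ^ T)), refine_count by assumption.
    pose proof (agree_in_block_sparse a w Hw Ha). nia.
Qed.

Lemma thin_periodic_cover C : infinite_set C -> forall J, exists T Phi,
  periodic (2 ^ T) Phi /\ (forall b, shifts_into_zeros C b -> Phi b = true) /\
  32 ^ J * cnt Phi 0 (2 ^ T) <= 31 ^ J * 2 ^ T.
Proof.
  intros HC J. induction J as [|J IH].
  - exists 0, (fun _ => true). repeat split; auto.
  - destruct IH as [T [Phi [HPhi [Hcover Hcnt]]]].
    destruct (thinning_stage C T Phi HC HPhi Hcover) as [a [Phi' [HPhi' [Hcover' Hcnt']]]].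
    exists (T + a), Phi'. split; [|split]; auto.
    rewrite Nat.pow_add_r in *. simpl (32 ^ S J). simpl (31 ^ S J).
    assert (32 ^ J * (32 * cnt Phi' 0 (2 ^ T * 2 ^ a))
            <= 32 ^ J * (31 * 2 ^ a * cnt Phi 0 (2 ^ T)))
      by (apply Nat.mul_le_mono_l; exact Hcnt').
    assert (31 * 2 ^ a * (32 ^ J * cnt Phi 0 (2 ^ T)) <= 31 * 2 ^ a * (31 ^ J * 2 ^ T))
      by (apply Nat.mul_le_mono_l; exact Hcnt).
    nia.
Qed.

Definition tm_zeros (n : nat) : bool := negb (tm n).

Lemma tm_zeros_pairs k m : cnt tm_zeros (2 * m) (2 * k) = k.
Proof.
  revert m; induction k as [|k IH]; intros m; [reflexivity|].
  replace (2 * S k) with (2 + 2 * k) by lia. rewrite cnt_add.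
  replace (2 * m + 2) with (2 * S m) by lia. rewrite IH.
  cbn [cnt]. replace (S (2 * m)) with (2 * m + 1) by lia.
  unfold tm_zeros. rewrite tm_double_succ, tm_double. destruct (tm m); simpl; lia.
Qed.

Lemma tm_zeros_window M N : 2 * cnt tm_zeros M N <= N + 2 /\ N <= 2 * cnt tm_zeros M N + 2.
Proof.
  split.
  - pose proof (Nat.div_mod_eq M 2). pose proof (Nat.mod_upper_bound M 2).
    pose proof (Nat.div_mod_eq (N + 2) 2). pose proof (Nat.mod_upper_bound (N + 2) 2).
    assert (cnt tm_zeros M N <= cnt tm_zeros (2 * (M / 2)) (2 * ((N + 2) / 2)))
      by (apply cnt_sub; lia).
    rewrite tm_zeros_pairs in *. lia.
  - destruct N as [|N]; [lia|].
    pose proof (Nat.div_mod_eq (M + 1) 2). pose proof (Nat.mod_upper_bound (M + 1) 2).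
    pose proof (Nat.div_mod_eq N 2). pose proof (Nat.mod_upper_bound N 2).
    assert (cnt tm_zeros (2 * ((M + 1) / 2)) (2 * (N / 2)) <= cnt tm_zeros M (S N))
      by (apply cnt_sub; lia).
    rewrite tm_zeros_pairs in *. lia.
Qed.

Open Scope R_scope.

Lemma window_density_le_1 P N M : window_density P N M <= 1.
Proof.
  unfold window_density. destruct N as [|N].
  - simpl. unfold Rdiv. rewrite Rmult_0_l. lra.
  - assert (Hc : INR (cnt P M (S N)) <= INR (S N)) by apply le_INR, cnt_le.
    assert (0 < INR (S N)) by (apply lt_0_INR; lia).
    apply Rmult_le_reg_r with (INR (S N)); auto.
    unfold Rdiv. rewrite Rmult_assoc, Rinv_l by lra. lra.
Qed.

Lemma tm_zeros_window_density N M : (1 <= N)%nat ->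
  Rabs (window_density tm_zeros N M - 1 / 2) <= 1 / INR N.
Proof.
  intros HN. destruct (tm_zeros_window M N) as [H1 H2].
  apply le_INR in H1, H2. rewrite !plus_INR, !mult_INR in H1, H2. simpl (INR 2) in *.
  assert (Hn : 0 < INR N) by (apply lt_0_INR; lia).
  unfold window_density, Rdiv. set (c := INR (cnt tm_zeros M N)) in *. set (n := INR N) in *.
  assert (Hi : n * / n = 1) by (apply Rinv_r; lra).
  assert (0 < / n) by (apply Rinv_0_lt_compat; lra).
  set (i := / n) in *. rewrite Rmult_1_l. apply Rabs_le. split; nra.
Qed.

Lemma Rabs_le_bounds x b : Rabs x <= b -> - b <= x <= b.
Proof. unfold Rabs. destruct (Rcase_abs x); lra. Qed.

Lemma window_sup_exists P N :
  {s : R | is_lub (fun x => exists M, x = window_density P N M) s}.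
Proof.
  apply completeness.
  - exists 1. intros x [M ->]. apply window_density_le_1.
  - exists (window_density P N 0), 0%nat. reflexivity.
Qed.

Lemma ubd_of_uniform_windows P delta :
  (forall N M, (1 <= N)%nat -> Rabs (window_density P N M - delta) <= 1 / INR N) ->
  upper_banach_density_is P delta.
Proof.
  intros Hwin. exists (fun N => proj1_sig (window_sup_exists P N)). split.
  { intros N. exact (proj2_sig (window_sup_exists P N)). }
  intros eps Heps. destruct (INR_archimed eps 2 Heps) as [N0 HN0].
  assert (HN0p : (1 <= N0)%nat) by (destruct N0; [simpl in HN0; lra | lia]).
  exists N0. intros n Hn. unfold Rdist.
  destruct (window_sup_exists P n) as [s [Hub Hleast]]. simpl.
  assert (Hnp : 0 < INR n) by (apply lt_0_INR; lia).
  assert (Hle : INR N0 <= INR n) by (apply le_INR; lia).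
  assert (Hinv : 1 / INR n < eps).
  { apply Rmult_lt_reg_r with (INR n); auto.
    unfold Rdiv. rewrite Rmult_1_l, Rinv_l by lra. nra. }
  assert (Hupper : s <= delta + 1 / INR n).
  { apply Hleast. intros x [M ->].
    pose proof (Hwin n M ltac:(lia)) as H. apply Rabs_le_bounds in H. lra. }
  assert (Hlower : delta - 1 / INR n <= s).
  { pose proof (Hwin n 0%nat ltac:(lia)) as H. apply Rabs_le_bounds in H.
    assert (window_density P n 0 <= s) by (apply Hub; exists 0%nat; reflexivity). lra. }
  apply Rabs_def1; lra.
Qed.

Lemma tm_zeros_density : upper_banach_density_is tm_zeros (1 / 2).
Proof. apply ubd_of_uniform_windows. intros N M HN. now apply tm_zeros_window_density. Qed.

Lemma cv_le_of_subsequence_bound (s : nat -> R) d delta L :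
  Un_cv s d -> (L <> 0)%nat -> 0 <= delta ->
  (forall q, (1 <= q)%nat -> s (q * L)%nat <= delta + delta / INR q) -> d <= delta.
Proof.
  intros Hcv HL Hdelta Hs. apply Rnot_lt_le. intros Hlt.
  set (eps := (d - delta) / 2).
  destruct (Hcv eps) as [N0 HN0]; [unfold eps; lra|].
  destruct (INR_archimed eps delta) as [n Hn]; [unfold eps; lra|].
  set (q := S (N0 + n)).
  assert (Hq : INR n + 1 <= INR q)
    by (unfold q; rewrite S_INR; apply Rplus_le_compat_r, le_INR; lia).
  assert (Hn0 : 0 <= INR n) by apply pos_INR.
  assert (Hsmall : delta / INR q < eps).
  { apply Rmult_lt_reg_r with (INR q); [lra|].
    unfold Rdiv. rewrite Rmult_assoc, Rinv_l by lra. nra. }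
  specialize (HN0 (q * L)%nat ltac:(unfold q; nia)). unfold Rdist in HN0.
  specialize (Hs q ltac:(unfold q; lia)).
  apply Rabs_def2 in HN0. unfold eps in *. lra.
Qed.

(* A set contained in an L-periodic set P has upper Banach density at most
   the density |P ∩ [0, L)| / L of P: a window of length qL meets at most
   q + 1 periods. *)
Lemma ubd_le_periodic B P L d :
  upper_banach_density_is B d -> (forall i, B i = true -> P i = true) ->
  periodic L P -> (L <> 0)%nat -> d <= INR (cnt P 0 L) / INR L.
Proof.
  intros [s [Hlub Hcv]] Hsub HP HL.
  assert (HLr : 0 < INR L) by (apply lt_0_INR; lia).
  assert (Hc : 0 <= INR (cnt P 0 L)) by apply pos_INR.
  apply (cv_le_of_subsequence_bound s d _ L Hcv HL).
  { apply Rmult_le_pos; [lra | left; now apply Rinv_0_lt_compat]. }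
  intros q Hq. destruct (Hlub (q * L)%nat) as [_ Hleast]. apply Hleast.
  intros x [M ->]. unfold window_density.
  assert (Hwin : INR (cnt B M (q * L)) <= INR (q + 1) * INR (cnt P 0 L)).
  { rewrite <- mult_INR. apply le_INR.
    transitivity (cnt P M (q * L)); [now apply cnt_mono|].
    now apply periodic_window_bound. }
  assert (HQ : 0 < INR q) by (apply lt_0_INR; lia).
  rewrite plus_INR in Hwin. simpl (INR 1) in Hwin. rewrite mult_INR.
  replace (INR (cnt P 0 L) / INR L + INR (cnt P 0 L) / INR L / INR q)
    with ((INR q + 1) * INR (cnt P 0 L) / (INR q * INR L)) by (field; lra).
  unfold Rdiv. apply Rmult_le_compat_r; [|exact Hwin].
  left. apply Rinv_0_lt_compat. nra.
Qed.

Lemma count_ratio_le (a b c L J : nat) : (0 < a)%nat -> (L <> 0)%nat ->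
  (a ^ J * c <= b ^ J * L)%nat -> INR c / INR L <= (INR b / INR a) ^ J.
Proof.
  intros Ha HL H. apply le_INR in H. rewrite !mult_INR, !pow_INR in H.
  assert (0 < INR L) by (apply lt_0_INR; lia).
  assert (0 < INR a ^ J) by (apply pow_lt, lt_0_INR; lia).
  assert (INR a <> 0) by (apply not_0_INR; lia).
  unfold Rdiv. rewrite Rpow_mult_distr, pow_inv.
  apply (Rmult_le_reg_r (INR L * INR a ^ J)); [nra|].
  replace (INR c * / INR L * (INR L * INR a ^ J)) with (INR a ^ J * INR c) by (field; lra).
  replace (INR b ^ J * / INR a ^ J * (INR L * INR a ^ J)) with (INR b ^ J * INR L)
    by (field; lra).
  exact H.
Qed.

Theorem proposition1 :
  exists A : nat -> bool,
    pos_ubd A /\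
    ~ (exists B C : nat -> bool, pos_ubd B /\ infinite_set C /\ sumset_sub B C A).
Proof.
  exists tm_zeros. split.
  { exists (1 / 2). split; [exact tm_zeros_density | lra]. }
  intros [B [C [[d [HB Hd]] [HC Hsum]]]].
  assert (HBC : forall b, B b = true -> shifts_into_zeros C b).
  { intros b Hb c Hc. specialize (Hsum b c Hb Hc). unfold tm_zeros in Hsum.
    now destruct (tm (b + c)). }
  (* Choose J with (31/32)^J < d and cover B by a periodic set of density
     at most (31/32)^J. *)
  destruct (pow_lt_1_zero (31 / 32) ltac:(rewrite Rabs_pos_eq; lra) d Hd) as [J HJ].
  specialize (HJ J (le_n J)). rewrite Rabs_pos_eq in HJ by (apply pow_le; lra).
  destruct (thin_periodic_cover C HC J) as [T [Phi [HPhi [Hcover Hcnt]]]].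
  assert (HT : (2 ^ T <> 0)%nat) by (apply Nat.pow_nonzero; lia).
  pose proof (ubd_le_periodic B Phi (2 ^ T) d HB (fun b Hb => Hcover b (HBC b Hb)) HPhi HT)
    as Hdens.
  pose proof (count_ratio_le 32 31 _ _ J ltac:(lia) HT Hcnt) as Hthin.
  replace (INR 31 / INR 32) with (31 / 32) in Hthin by (simpl; lra).
  lra.
Qed.
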